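(* Let $N\ge2$ and let $(\vartheta_i(t))_{i=1}^N$, $t\ge0$, $\vartheta_i(t)\in\mathbb R$, be a solution of $$\dot\vartheta_i(t)=-\frac1N\sum_{j=1}^N\sin(\vartheta_i(t)-\vartheta_j(t)),\qquad i=1,\dots,N,$$ which is not a stationary solution. Then each $\vartheta_j(t)$ converges to a finite limit $\vartheta_j^*$ as $t\to\infty$, and $(\vartheta_j^* )_{j=1}^N$ is a stationary configuration of type $(N-k,k)$ for some integer $0\le k<N/2$ (complete frequency synchronization). Moreover, if $\vartheta_i(0)\neq\vartheta_j(0)\pmod{2\pi}$ for all $i\neq j$, then the limit configuration is of type $(N,0)$ or $(N-1,1)$, i.e. $k\in\{0,1\}$.
   Context: The order parameters are defined by $R e^{\mathrm{i}\varphi}=\frac1N\sum_{j}e^{\mathrm{i}\vartheta_j}$. A stationary solution is a solution constant in time (mod $2\pi$). A configuration $(\vartheta_j^* )_{j=1}^N$ is of type $(N-k,k)$, $0\le k<N/2$, if there exist $\varphi^*\in\mathbb R$ and $I\subseteq\{1,\dots,N\}$ with $|I|=N-k$ such that $\vartheta_i^*=\varphi^*\pmod{2\pi}$ for $i\in I$ and $\vartheta_i^*=\varphi^*+\pi\pmod{2\pi}$ for $i\notin I$. Type $(N,0)$ is complete phase synchronization. *)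

From Stdlib Require Import Reals Lra Lia ZArith List.
Open Scope R_scope.

(* Oscillators are indexed by 0 .. N-1. *)

Definition kur_rhs (N : nat) (th : nat -> R) (i : nat) : R :=
  - (1 / INR N) * sum_f_R0 (fun j => sin (th i - th j)) (N - 1).

(* theta is a solution on [0, +oo): differentiable on (0,+oo) satisfying
   the ODE there, and right-continuous at t = 0 (values for t < 0 are
   irrelevant). *)
Definition is_solution (N : nat) (theta : nat -> R -> R) : Prop :=
  (forall i, (i < N)%nat -> forall t, 0 < t ->
     derivable_pt_lim (theta i) t (kur_rhs N (fun j => theta j t) i)) /\
  (forall i, (i < N)%nat -> forall eps, 0 < eps -> exists delta, 0 < delta /\
     forall t, 0 <= t < delta -> Rabs (theta i t - theta i 0) < eps).

Definition eq_mod2pi (x y : R) : Prop := exists m : Z, x = y + 2 * PI * IZR m.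

Definition is_stationary_solution (N : nat) (theta : nat -> R -> R) : Prop :=
  forall i, (i < N)%nat -> forall t, 0 <= t -> eq_mod2pi (theta i t) (theta i 0).

Definition is_stationary_config (N : nat) (th : nat -> R) : Prop :=
  forall i, (i < N)%nat -> kur_rhs N th i = 0.

Definition is_type (N k : nat) (th : nat -> R) : Prop :=
  (2 * k < N)%nat /\
  exists (phi : R) (I : list nat),
    NoDup I /\ (forall i, In i I -> (i < N)%nat) /\ length I = (N - k)%nat /\
    forall i, (i < N)%nat ->
      (In i I -> eq_mod2pi (th i) phi) /\
      (~ In i I -> eq_mod2pi (th i) (phi + PI)).

Definition converges_to (f : R -> R) (l : R) : Prop :=
  forall eps, 0 < eps -> exists T, forall t, T <= t -> Rabs (f t - l) < eps.

From Stdlib Require Import Reals Lra Lia ZArith List Classical.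
From Coquelicot Require Import Coquelicot.
Open Scope R_scope.

(* Write R e^{i phi} for the order parameter and u_j = R cos (theta_j - phi).  The system is
   the gradient flow of N R^2 / 2: (R^2)' = (2/N) D with D = sum_j theta_j'^2 and
   u_j^2 + theta_j'^2 = R^2.  Hence R^2 increases to a limit L, which is positive because the
   solution is not stationary.  Each u_j is +R or -R up to an error of order theta_j'^2 / R,
   so N R lies within D / R^2 of an integer N - 2m; as D is small at arbitrarily large times,
   N sqrt L = N - 2k, and near this level L - R^2 <= C D.  With this Lojasiewicz inequality,
   theta_j +- A sqrt (L - R^2) are monotone for large A, so every theta_j converges; the limit
   is a zero of the vector field with R > 0, hence of type (N - k, k).  Finally, the cross
   ratio of four points e^{i theta_j} is conserved by the flow.  If two limits sit at phi and
   two at phi + pi, the limiting cross ratio forces one of the two pairs to coincide at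
   t = 0, so distinct initial phases allow at most one antipodal oscillator. *)

(** * Real analysis on a half-line *)

Lemma derivable_pt_lim_eq_deriv (f : R -> R) x l l' :
  derivable_pt_lim f x l -> l = l' -> derivable_pt_lim f x l'.
Proof. intros Hf <-. exact Hf. Qed.

Lemma derivable_pt_lim_sum_f_R0 (f : nat -> R -> R) (f' : nat -> R) x n :
  (forall j, (j <= n)%nat -> derivable_pt_lim (f j) x (f' j)) ->
  derivable_pt_lim (fun y => sum_f_R0 (fun j => f j y) n) x (sum_f_R0 f' n).
Proof.
  induction n as [|n IH]; intros Hf; simpl.
  - apply Hf; lia.
  - apply (derivable_pt_lim_plus (fun y => sum_f_R0 (fun j => f j y) n)).
    + apply IH; intros; apply Hf; lia.
    + apply Hf; lia.
Qed.

Lemma derivable_pt_lim_sin_comp (f : R -> R) x l :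
  derivable_pt_lim f x l -> derivable_pt_lim (fun y => sin (f y)) x (cos (f x) * l).
Proof. intros Hf. exact (derivable_pt_lim_comp f sin x l _ Hf (derivable_pt_lim_sin _)). Qed.

Lemma derivable_pt_lim_cos_comp (f : R -> R) x l :
  derivable_pt_lim f x l -> derivable_pt_lim (fun y => cos (f y)) x (- sin (f x) * l).
Proof. intros Hf. exact (derivable_pt_lim_comp f cos x l _ Hf (derivable_pt_lim_cos _)). Qed.

Lemma derivable_pt_lim_half_sub (f g : R -> R) x a b :
  derivable_pt_lim f x a -> derivable_pt_lim g x b ->
  derivable_pt_lim (fun y => (f y - g y) / 2) x ((a - b) / 2).
Proof.
  intros Hf Hg.
  apply (derivable_pt_lim_eq_deriv _ _ _ _
           (derivable_pt_lim_mult (fun y => f y - g y) (fun _ => / 2) x _ _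
              (derivable_pt_lim_minus f g x a b Hf Hg) (derivable_pt_lim_const (/ 2) x))).
  unfold Rdiv. ring.
Qed.

Lemma nonincreasing_of_derive_nonpos (f f' : R -> R) a :
  (forall t, a < t -> derivable_pt_lim f t (f' t)) -> (forall t, a < t -> f' t <= 0) ->
  forall x y, a < x -> x <= y -> f y <= f x.
Proof.
  intros Hd Hneg x y Hx Hxy. destruct (Rle_lt_or_eq_dec _ _ Hxy) as [Hlt | <-]; [|lra].
  destruct (MVT_cor2 f f' x y Hlt) as [c [Hc Hcxy]].
  - intros c Hc. apply Hd. lra.
  - assert (f' c <= 0) by (apply Hneg; lra). nra.
Qed.

Lemma nondecreasing_of_derive_nonneg (f f' : R -> R) a :
  (forall t, a < t -> derivable_pt_lim f t (f' t)) -> (forall t, a < t -> 0 <= f' t) ->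
  forall x y, a < x -> x <= y -> f x <= f y.
Proof.
  intros Hd Hpos x y Hx Hxy.
  enough (- f y <= - f x) by lra.
  apply (nonincreasing_of_derive_nonpos (fun t => - f t) (fun t => - f' t) a); auto.
  - intros t Ht. exact (derivable_pt_lim_opp f t _ (Hd t Ht)).
  - intros t Ht. specialize (Hpos t Ht). lra.
Qed.

Lemma constant_of_derive_zero (f : R -> R) a :
  (forall t, a < t -> derivable_pt_lim f t 0) -> forall x y, a < x -> a < y -> f x = f y.
Proof.
  intros Hd.
  assert (Hmono : forall x y, a < x -> x <= y -> f x = f y).
  { intros x y Hx Hxy. apply Rle_antisym.
    - apply (nondecreasing_of_derive_nonneg f (fun _ => 0) a); auto; intros; lra.
    - apply (nonincreasing_of_derive_nonpos f (fun _ => 0) a); auto; intros; lra. }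
  intros x y Hx Hy. destruct (Rle_dec x y).
  - apply Hmono; auto.
  - symmetry. apply Hmono; lra.
Qed.

Lemma derive_zero_at_interior_max (f : R -> R) a b c l :
  a < c < b -> (forall x, a < x < b -> f x <= f c) -> derivable_pt_lim f c l -> l = 0.
Proof.
  intros Hc Hmax Hd.
  rewrite <- (derive_pt_eq_0 f c l (exist _ l Hd) Hd).
  apply (deriv_maximum f a b); try lra. intros x Hx1 Hx2. apply Hmax; lra.
Qed.

Lemma derive_frequently_small (f f' : R -> R) M :
  (forall t, 0 < t -> derivable_pt_lim f t (f' t)) -> (forall t, Rabs (f t) <= M) ->
  forall d T, 0 < d -> exists t, T <= t /\ 0 < t /\ f' t < d.
Proof.
  intros Hd Hb d T Hdpos. apply NNPP. intros Hnot.
  set (a := Rmax T 1).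
  assert (Hge : forall t, a < t -> d <= f' t).
  { intros t Ht. apply Rnot_lt_le. intros Hlt. apply Hnot. exists t.
    pose proof (Rmax_l T 1); pose proof (Rmax_r T 1); unfold a in Ht; repeat split; lra. }
  set (x := a + 1). set (y := x + 2 * M / d + 1).
  assert (HM : 0 <= M) by (pose proof (Hb 0); pose proof (Rabs_pos (f 0)); lra).
  assert (Hgrow : f x + d * (y - x) <= f y).
  { enough (f x - d * x <= f y - d * y) by lra.
    apply (nondecreasing_of_derive_nonneg (fun t => f t - d * t) (fun t => f' t - d) a).
    - intros t Ht. apply (derivable_pt_lim_minus f (fun t => d * t)).
      + apply Hd. pose proof (Rmax_r T 1). unfold a in Ht. lra.
      + apply (derivable_pt_lim_eq_deriv _ _ _ _
                 (derivable_pt_lim_scal (fun t => t) d t 1 (derivable_pt_lim_id t))).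
        ring.
    - intros t Ht. specialize (Hge t Ht). lra.
    - unfold x; lra.
    - unfold y. assert (0 <= 2 * M / d) by (apply Rdiv_le_0_compat; lra). lra. }
  assert (Hdy : d * (y - x) = 2 * M + d) by (unfold y; field; lra).
  pose proof (Hb x) as Hx. pose proof (Hb y) as Hy.
  apply Rabs_le_between in Hx. apply Rabs_le_between in Hy. lra.
Qed.

(* Gronwall: w^2 e^{-2Kt} is nonincreasing. *)
Lemma linear_ode_vanishes (w c : R -> R) a K tau :
  (forall t, a < t -> derivable_pt_lim w t (c t * w t)) -> (forall t, a < t -> c t <= K) ->
  a < tau -> w tau = 0 -> forall t, tau <= t -> w t = 0.
Proof.
  intros Hd Hc Htau Hw0 t Ht.
  set (F := fun s => w s * w s * exp (- 2 * K * s)).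
  assert (HF : F t <= F tau).
  { apply (nonincreasing_of_derive_nonpos F
             (fun s => 2 * (c s - K) * (w s * w s * exp (- 2 * K * s))) a); auto.
    - intros s Hs. unfold F.
      apply (derivable_pt_lim_eq_deriv _ _ _ _
        (derivable_pt_lim_mult _ _ s _ _
           (derivable_pt_lim_mult _ _ s _ _ (Hd s Hs) (Hd s Hs))
           (derivable_pt_lim_comp (fun s => - 2 * K * s) exp s _ _
              (derivable_pt_lim_scal (fun s => s) (- 2 * K) s 1 (derivable_pt_lim_id s))
              (derivable_pt_lim_exp _)))).
      unfold mult_fct, comp. ring.
    - intros s Hs. specialize (Hc s Hs). pose proof (exp_pos (- 2 * K * s)).
      assert (0 <= w s * w s * exp (- 2 * K * s)) by (apply Rmult_le_pos; [nra | lra]). nra. }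
  unfold F in HF. rewrite Hw0 in HF. pose proof (exp_pos (- 2 * K * t)).
  assert (w t * w t <= 0) by nra. nra.
Qed.

Lemma is_lim_nondecreasing_bounded (f : R -> R) a M :
  (forall x y, a < x -> x <= y -> f x <= f y) -> (forall t, a < t -> f t <= M) ->
  exists l : R, is_lim f p_infty l /\ forall t, a < t -> f t <= l.
Proof.
  intros Hmono Hb.
  set (E := fun y => exists t, a < t /\ y = f t).
  destruct (completeness E) as [l [Hub Hlub]].
  { exists M. intros y [t [Ht ->]]. auto. }
  { exists (f (a + 1)), (a + 1). split; [lra | auto]. }
  assert (Hle : forall t, a < t -> f t <= l) by (intros t Ht; apply Hub; exists t; auto).
  exists l. split; [|exact Hle].
  apply is_lim_spec. intros eps.
  destruct (classic (exists t, a < t /\ l - eps < f t)) as [[t0 [Ht0 Hlt]] | Hno].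
  - exists t0. intros t Ht. pose proof (Hmono t0 t Ht0 (Rlt_le _ _ Ht)).
    pose proof (Hle t ltac:(lra)). apply Rabs_lt_between'. lra.
  - exfalso. assert (l <= l - eps); [|pose proof (cond_pos eps); lra].
    apply Hlub. intros y [t [Ht ->]]. apply Rnot_lt_le. intros Hlt. apply Hno. eauto.
Qed.

Lemma is_lim_nonincreasing_bounded (f : R -> R) a M :
  (forall x y, a < x -> x <= y -> f y <= f x) -> (forall t, a < t -> M <= f t) ->
  exists l : R, is_lim f p_infty l.
Proof.
  intros Hmono Hb.
  destruct (is_lim_nondecreasing_bounded (fun t => - f t) a (- M)) as [l [Hl _]].
  - intros x y Hx Hxy. specialize (Hmono x y Hx Hxy). lra.
  - intros t Ht. specialize (Hb t Ht). lra.
  - exists (- l). apply (is_lim_ext (fun t => - - f t)); [intros; ring|].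
    apply (is_lim_opp _ _ l Hl).
Qed.

(* f + g is nonincreasing and f - g nondecreasing, so both converge and so does their mean f. *)
Lemma is_lim_of_derive_dominated (f f' g g' : R -> R) a :
  (forall t, a < t -> derivable_pt_lim f t (f' t)) ->
  (forall t, a < t -> derivable_pt_lim g t (g' t)) ->
  (forall t, a < t -> Rabs (f' t) <= - g' t) -> (forall t, a < t -> 0 <= g t) ->
  exists l : R, is_lim f p_infty l.
Proof.
  intros Hf Hg Hdom Hpos.
  assert (Hdec : forall x y, a < x -> x <= y -> f y + g y <= f x + g x).
  { apply (nonincreasing_of_derive_nonpos _ (fun t => f' t + g' t) a).
    - intros t Ht. exact (derivable_pt_lim_plus f g t _ _ (Hf t Ht) (Hg t Ht)).
    - intros t Ht. specialize (Hdom t Ht). apply Rabs_le_between in Hdom. lra. }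
  assert (Hinc : forall x y, a < x -> x <= y -> f x - g x <= f y - g y).
  { apply (nondecreasing_of_derive_nonneg _ (fun t => f' t - g' t) a).
    - intros t Ht. exact (derivable_pt_lim_minus f g t _ _ (Hf t Ht) (Hg t Ht)).
    - intros t Ht. specialize (Hdom t Ht). apply Rabs_le_between in Hdom. lra. }
  set (x0 := a + 1).
  destruct (is_lim_nonincreasing_bounded (fun t => f t + g t) x0 (f x0 - g x0)) as [l1 Hl1].
  { intros x y Hx Hxy. apply Hdec; unfold x0 in *; lra. }
  { intros t Ht. pose proof (Hinc x0 t ltac:(unfold x0; lra) ltac:(lra)).
    pose proof (Hpos t ltac:(unfold x0 in *; lra)). lra. }
  destruct (is_lim_nondecreasing_bounded (fun t => f t - g t) x0 (f x0 + g x0)) as [l2 [Hl2 _]].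
  { intros x y Hx Hxy. apply Hinc; unfold x0 in *; lra. }
  { intros t Ht. pose proof (Hdec x0 t ltac:(unfold x0; lra) ltac:(lra)).
    pose proof (Hpos t ltac:(unfold x0 in *; lra)). lra. }
  exists ((l1 + l2) / 2).
  apply (is_lim_ext (fun t => / 2 * ((f t + g t) + (f t - g t)))); [intros; field|].
  replace ((l1 + l2) / 2) with (/ 2 * (l1 + l2)) by field.
  apply (is_lim_scal_l _ (/ 2) p_infty (l1 + l2)), is_lim_plus'; assumption.
Qed.

Lemma converges_to_of_is_lim (f : R -> R) (l : R) : is_lim f p_infty l -> converges_to f l.
Proof.
  intros Hl eps Heps. apply is_lim_spec in Hl. destruct (Hl (mkposreal eps Heps)) as [M HM].
  exists (M + 1). intros t Ht. apply HM. lra.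
Qed.

Lemma is_lim_le_of_frequently_lt (f : R -> R) (l : R) :
  is_lim f p_infty l -> (forall d T, 0 < d -> exists t, T <= t /\ f t < d) -> l <= 0.
Proof.
  intros Hl Hfreq. apply Rnot_lt_le. intros Hpos.
  apply is_lim_spec in Hl. destruct (Hl (mkposreal (l / 2) ltac:(lra))) as [M HM].
  destruct (Hfreq (l / 2) (M + 1) ltac:(lra)) as [t [Ht Hft]].
  specialize (HM t ltac:(lra)). simpl in HM. apply Rabs_lt_between' in HM. lra.
Qed.

Section FilterLimits.

Context {T : Type} {F : (T -> Prop) -> Prop} {FF : Filter F}.

Lemma filterlim_Rplus (f g : T -> R) a b :
  filterlim f F (locally a) -> filterlim g F (locally b) ->
  filterlim (fun x => f x + g x) F (locally (a + b)).
Proof. intros Hf Hg. exact (filterlim_comp_2 f g Rplus Hf Hg (filterlim_plus a b)). Qed.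

Lemma filterlim_Rmult (f g : T -> R) a b :
  filterlim f F (locally a) -> filterlim g F (locally b) ->
  filterlim (fun x => f x * g x) F (locally (a * b)).
Proof. intros Hf Hg. exact (filterlim_comp_2 f g Rmult Hf Hg (filterlim_mult a b)). Qed.

Lemma filterlim_Rminus (f g : T -> R) a b :
  filterlim f F (locally a) -> filterlim g F (locally b) ->
  filterlim (fun x => f x - g x) F (locally (a - b)).
Proof.
  intros Hf Hg. apply (filterlim_Rplus f (fun x => - g x)); [exact Hf|].
  exact (filterlim_comp _ _ _ g Ropp _ _ _ Hg (filterlim_opp b)).
Qed.

Lemma filterlim_Rscal (f : T -> R) c a :
  filterlim f F (locally a) -> filterlim (fun x => c * f x) F (locally (c * a)).
Proof. intros Hf. apply filterlim_Rmult; [apply filterlim_const | exact Hf]. Qed.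

Lemma filterlim_sin_comp (f : T -> R) a :
  filterlim f F (locally a) -> filterlim (fun x => sin (f x)) F (locally (sin a)).
Proof. intros Hf. exact (filterlim_comp _ _ _ f sin _ _ _ Hf (continuous_sin a)). Qed.

Lemma filterlim_cos_comp (f : T -> R) a :
  filterlim f F (locally a) -> filterlim (fun x => cos (f x)) F (locally (cos a)).
Proof. intros Hf. exact (filterlim_comp _ _ _ f cos _ _ _ Hf (continuous_cos a)). Qed.

Lemma filterlim_sqrt_comp (f : T -> R) a :
  filterlim f F (locally a) -> filterlim (fun x => sqrt (f x)) F (locally (sqrt a)).
Proof. intros Hf. exact (filterlim_comp _ _ _ f sqrt _ _ _ Hf (continuous_sqrt a)). Qed.

Lemma filterlim_sin_half_sub (f g : T -> R) a b :
  filterlim f F (locally a) -> filterlim g F (locally b) ->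
  filterlim (fun x => sin ((f x - g x) / 2)) F (locally (sin ((a - b) / 2))).
Proof.
  intros Hf Hg. apply filterlim_sin_comp.
  apply (filterlim_Rmult (fun x => f x - g x) (fun _ => / 2)); [|apply filterlim_const].
  apply filterlim_Rminus; assumption.
Qed.

Lemma filterlim_sum_f_R0 (f : nat -> T -> R) (l : nat -> R) n :
  (forall j, (j <= n)%nat -> filterlim (f j) F (locally (l j))) ->
  filterlim (fun x => sum_f_R0 (fun j => f j x) n) F (locally (sum_f_R0 l n)).
Proof.
  induction n as [|n IH]; intros Hf; simpl.
  - apply Hf; lia.
  - apply filterlim_Rplus; [apply IH; intros; apply Hf; lia | apply Hf; lia].
Qed.

End FilterLimits.

Lemma filterlim_R_unique {T : Type} {F : (T -> Prop) -> Prop} {FF : ProperFilter F}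
  (f : T -> R) a b : filterlim f F (locally a) -> filterlim f F (locally b) -> a = b.
Proof.
  exact (@filterlim_locally_unique T R_AbsRing R_NormedModule F (Proper_StrongProper F FF) f a b).
Qed.

Lemma filterlim_eventually_const {T : Type} {F : (T -> Prop) -> Prop} {FF : ProperFilter F}
  (f : T -> R) l c : filterlim f F (locally l) -> F (fun x => f x = c) -> l = c.
Proof.
  intros Hf Hc. apply (filterlim_R_unique (fun _ => c)); [|apply filterlim_const].
  exact (filterlim_ext_loc f (fun _ => c) Hc Hf).
Qed.

(** * Trigonometric identities and counting *)

Lemma cos_2PI_mult (m : Z) : cos (2 * PI * IZR m) = 1.
Proof.
  replace (2 * PI * IZR m) with (2 * (IZR m * PI)) by ring.
  rewrite cos_2a_sin, sin_eq_0_1 by (exists m; reflexivity). ring.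
Qed.

Lemma eq_mod2pi_of_sin_cos x y : sin (x - y) = 0 -> cos (x - y) = 1 -> eq_mod2pi x y.
Proof.
  intros Hs Hc. destruct (sin_eq_0_0 _ Hs) as [k Hk].
  destruct (Z.Even_or_Odd k) as [[m ->] | [m ->]].
  - exists m. rewrite mult_IZR in Hk. simpl in Hk. lra.
  - exfalso. rewrite Hk, plus_IZR, mult_IZR in Hc. simpl in Hc.
    replace ((2 * IZR m + 1) * PI) with (2 * PI * IZR m + PI) in Hc by ring.
    rewrite neg_cos, cos_2PI_mult in Hc. lra.
Qed.

Lemma eq_mod2pi_antipodal_of_sin_cos x y :
  sin (x - y) = 0 -> cos (x - y) = -1 -> eq_mod2pi x (y + PI).
Proof.
  intros Hs Hc. apply eq_mod2pi_of_sin_cos;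
    replace (x - (y + PI)) with ((x - y) - PI) by ring;
    rewrite ?(sin_minus (x - y) PI), ?(cos_minus (x - y) PI), sin_PI, cos_PI, Hs, Hc; ring.
Qed.

Lemma eq_mod2pi_of_sin_half x y : sin ((x - y) / 2) = 0 -> eq_mod2pi x y.
Proof. intros H. destruct (sin_eq_0_0 _ H) as [m Hm]. exists m. lra. Qed.

Lemma sin_half_eq_mod2pi x y phi :
  eq_mod2pi x phi -> eq_mod2pi y phi -> sin ((x - y) / 2) = 0.
Proof.
  intros [m Hm] [n Hn]. apply sin_eq_0_1. exists (m - n)%Z.
  rewrite minus_IZR, Hm, Hn. field.
Qed.

Lemma cos_sub_antipodal x y phi :
  eq_mod2pi x phi -> eq_mod2pi y (phi + PI) -> cos (x - y) = -1.
Proof.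
  intros [m Hm] [n Hn]. rewrite Hm, Hn.
  replace (phi + 2 * PI * IZR m - (phi + PI + 2 * PI * IZR n))
    with (2 * PI * IZR (m - n) - PI) by (rewrite minus_IZR; ring).
  rewrite cos_minus, cos_PI, sin_PI, cos_2PI_mult. ring.
Qed.

Lemma sin_half_sqr_of_cos_eq_m1 x : cos x = -1 -> sin (x / 2) * sin (x / 2) = 1.
Proof. intros H. replace x with (2 * (x / 2)) in H by field. rewrite cos_2a_sin in H. lra. Qed.

Lemma sin_half_ptolemy a b c d :
  sin ((a - c) / 2) * sin ((b - d) / 2) - sin ((a - d) / 2) * sin ((b - c) / 2) =
  sin ((a - b) / 2) * sin ((c - d) / 2).
Proof. unfold Rdiv. rewrite !Rmult_minus_distr_r, !sin_minus. ring. Qed.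

(* With a' = Y cos a - X sin a and b' = Y cos b - X sin b, the left side is the time derivative
   of sin ((a - b) / 2). *)
Lemma sin_half_drift_identity X Y a b :
  cos ((a - b) / 2) * ((Y * cos a - X * sin a - (Y * cos b - X * sin b)) / 2) =
  - ((X * cos a + Y * sin a + (X * cos b + Y * sin b)) / 2) * sin ((a - b) / 2).
Proof.
  set (s := (a + b) / 2). set (d := (a - b) / 2).
  assert (Ha : a = s + d) by (unfold s, d; field).
  assert (Hb : b = s - d) by (unfold s, d; field).
  clearbody s d. subst a b.
  rewrite cos_plus, sin_plus, cos_minus, sin_minus. field.
Qed.

Lemma sum_f_R0_lin (f g : nat -> R) a b n :
  sum_f_R0 (fun j => a * f j + b * g j) n = a * sum_f_R0 f n + b * sum_f_R0 g n.
Proof. induction n as [|n IH]; simpl; [|rewrite IH]; ring. Qed.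

Lemma sum_f_R0_term_le (f : nat -> R) n i :
  (forall j, 0 <= f j) -> (i <= n)%nat -> f i <= sum_f_R0 f n.
Proof.
  intros Hpos. induction n as [|n IH]; intros Hi.
  - replace i with 0%nat by lia. simpl. lra.
  - simpl. destruct (Nat.eq_dec i (S n)) as [-> | Hne].
    + pose proof (cond_pos_sum f n Hpos). lra.
    + pose proof (IH ltac:(lia)). pose proof (Hpos (S n)). lra.
Qed.

(* Each u_j is within v_j^2 / s of s or of -s; m counts the indices where it is near -s. *)
Lemma sum_near_signed_count (u v : nat -> R) s n :
  0 < s -> (forall j, (j <= n)%nat -> u j * u j + v j * v j = s * s) ->
  exists m, (m <= S n)%nat /\
    Rabs (sum_f_R0 u n - (INR (S n) - 2 * INR m) * s) * s <= sum_f_R0 (fun j => v j * v j) n.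
Proof.
  intros Hs Huv.
  assert (Hterm : forall j, (j <= n)%nat ->
            Rabs (u j - s) * s <= v j * v j \/ Rabs (u j + s) * s <= v j * v j).
  { intros j Hj. specialize (Huv j Hj). destruct (Rle_lt_dec 0 (u j)).
    - left. rewrite Rabs_left1 by nra. nra.
    - right. rewrite Rabs_right by nra. nra. }
  induction n as [|n IH].
  - simpl. destruct (Hterm 0%nat (le_n _)) as [H | H].
    + exists 0%nat. split; [lia|]. simpl.
      replace (u 0%nat - (1 - 2 * 0) * s) with (u 0%nat - s) by ring. exact H.
    + exists 1%nat. split; [lia|]. simpl.
      replace (u 0%nat - (1 - 2 * 1) * s) with (u 0%nat + s) by ring. exact H.
  - destruct (IH ltac:(intros; apply Huv; lia) ltac:(intros; apply Hterm; lia)) as [m [Hm Hb]].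
    set (e := sum_f_R0 u n - (INR (S n) - 2 * INR m) * s) in Hb.
    pose proof (Rabs_triang e (u (S n) - s)). pose proof (Rabs_triang e (u (S n) + s)).
    simpl sum_f_R0. rewrite (S_INR (S n)).
    destruct (Hterm (S n) (le_n _)) as [Hn | Hn].
    + exists m. split; [lia|].
      replace (sum_f_R0 u n + u (S n) - (INR (S n) + 1 - 2 * INR m) * s)
        with (e + (u (S n) - s)) by (unfold e; ring). nra.
    + exists (S m). split; [lia|]. rewrite (S_INR m).
      replace (sum_f_R0 u n + u (S n) - (INR (S n) + 1 - 2 * (INR m + 1)) * s)
        with (e + (u (S n) + s)) by (unfold e; ring). nra.
Qed.

Lemma sum_sign_count (p : nat -> bool) n :
  sum_f_R0 (fun j => if p j then 1 else -1) n =
  INR (S n) - 2 * INR (length (filter (fun j => negb (p j)) (seq 0 (S n)))).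
Proof.
  induction n as [|n IH].
  - simpl. destruct (p 0%nat); simpl; ring.
  - rewrite seq_S, filter_app, length_app, plus_INR. simpl sum_f_R0. rewrite IH.
    rewrite (S_INR (S n)). simpl (0 + S n)%nat. cbn [filter].
    destruct (p (S n)); cbn [negb length]; change (INR 1) with 1; change (INR 0) with 0; ring.
Qed.

Lemma level_gap (N k m : nat) x y :
  x = INR N - 2 * INR k -> Rabs (x - y) < 1 -> Rabs (x - y) <= Rabs (y - (INR N - 2 * INR m)).
Proof.
  intros -> Hxy. destruct (Nat.eq_dec k m) as [<- | Hkm].
  - rewrite Rabs_minus_sym. lra.
  - assert (Hsep : INR k + 1 <= INR m \/ INR m + 1 <= INR k).
    { destruct (Nat.lt_total k m) as [H | [H | H]]; [left | contradiction | right];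
        apply le_INR in H; rewrite S_INR in H; lra. }
    revert Hxy. unfold Rabs. repeat destruct Rcase_abs; lra.
Qed.

Lemma level_of_approx (N : nat) x :
  (forall e, 0 < e -> exists m : nat, Rabs (x - (INR N - 2 * INR m)) < e) ->
  exists k : nat, x = INR N - 2 * INR k.
Proof.
  intros Happ. destruct (Happ 1 Rlt_0_1) as [k Hk]. exists k.
  destruct (Req_dec x (INR N - 2 * INR k)) as [E | E]; [exact E | exfalso].
  destruct (Happ (Rabs (x - (INR N - 2 * INR k)))) as [m Hm].
  { apply Rabs_pos_lt. lra. }
  pose proof (level_gap N k m (INR N - 2 * INR k) x eq_refl) as Hgap.
  rewrite Rabs_minus_sym in Hgap. specialize (Hgap Hk). lra.
Qed.

Lemma Rabs_mul_le_of_sqr_le v g D C :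
  v * v <= D -> g * g <= C * D -> 0 <= g -> 0 <= C -> Rabs v * g <= (C + 1) * D.
Proof.
  intros Hv Hg Hg0 HC.
  assert (HD : 0 <= D) by nra.
  assert (Habs : Rabs v * Rabs v = v * v) by (rewrite <- Rabs_mult; apply Rabs_right; nra).
  assert (Hsq : Rabs v * g * (Rabs v * g) <= (C + 1) * D * ((C + 1) * D)).
  { replace (Rabs v * g * (Rabs v * g)) with (v * v * (g * g)) by (rewrite <- Habs; ring).
    apply Rle_trans with (D * (C * D)); [apply Rmult_le_compat; nra | nra]. }
  pose proof (Rabs_pos v). nra.
Qed.

(** * The order parameter of a configuration *)

(* With R e^{i phi} = (1/N) sum_j e^{i th_j}: [mean_cos] and [mean_sin] are R cos phi and
   R sin phi, [order_sq] is R^2, and [alignment N th i] is R cos (th_i - phi). *)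
Definition mean_cos (N : nat) (th : nat -> R) : R :=
  / INR N * sum_f_R0 (fun j => cos (th j)) (N - 1).
Definition mean_sin (N : nat) (th : nat -> R) : R :=
  / INR N * sum_f_R0 (fun j => sin (th j)) (N - 1).
Definition order_sq (N : nat) (th : nat -> R) : R :=
  mean_cos N th * mean_cos N th + mean_sin N th * mean_sin N th.
Definition alignment (N : nat) (th : nat -> R) (i : nat) : R :=
  mean_cos N th * cos (th i) + mean_sin N th * sin (th i).
Definition dissipation (N : nat) (th : nat -> R) : R :=
  sum_f_R0 (fun j => kur_rhs N th j * kur_rhs N th j) (N - 1).

Lemma dissipation_nonneg N th : 0 <= dissipation N th.
Proof. apply cond_pos_sum. intros j. nra. Qed.

Lemma kur_rhs_sqr_le_dissipation N th i :
  (i < N)%nat -> kur_rhs N th i * kur_rhs N th i <= dissipation N th.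
Proof.
  intros Hi. apply (sum_f_R0_term_le (fun j => kur_rhs N th j * kur_rhs N th j));
    [intros; nra | lia].
Qed.

Section Configuration.

Variables (N : nat) (th : nat -> R).
Hypothesis N_pos : (0 < N)%nat.

Let INR_N_pos : 0 < INR N.
Proof. apply lt_0_INR. exact N_pos. Qed.

Lemma kur_rhs_order_param i :
  kur_rhs N th i = mean_sin N th * cos (th i) - mean_cos N th * sin (th i).
Proof.
  unfold kur_rhs, mean_cos, mean_sin.
  rewrite (sum_eq _ (fun j => sin (th i) * cos (th j) + (- cos (th i)) * sin (th j)))
    by (intros; rewrite sin_minus; ring).
  rewrite sum_f_R0_lin. field. lra.
Qed.

Lemma alignment_mul_add_kur_rhs_mul a b :
  alignment N th a * alignment N th b + kur_rhs N th a * kur_rhs N th b =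
  order_sq N th * cos (th a - th b).
Proof. rewrite !kur_rhs_order_param, cos_minus. unfold alignment, order_sq. ring. Qed.

Lemma alignment_kur_rhs_cross a b :
  alignment N th a * kur_rhs N th b - kur_rhs N th a * alignment N th b =
  order_sq N th * sin (th a - th b).
Proof. rewrite !kur_rhs_order_param, sin_minus. unfold alignment, order_sq. ring. Qed.

Lemma alignment_sqr_add_kur_rhs_sqr i :
  alignment N th i * alignment N th i + kur_rhs N th i * kur_rhs N th i = order_sq N th.
Proof. rewrite alignment_mul_add_kur_rhs_mul, Rminus_diag, cos_0. ring. Qed.

Lemma sum_alignment : sum_f_R0 (alignment N th) (N - 1) = INR N * order_sq N th.
Proof.
  assert (Hc : sum_f_R0 (fun j => cos (th j)) (N - 1) = INR N * mean_cos N th)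
    by (unfold mean_cos; field; lra).
  assert (Hs : sum_f_R0 (fun j => sin (th j)) (N - 1) = INR N * mean_sin N th)
    by (unfold mean_sin; field; lra).
  unfold alignment. rewrite sum_f_R0_lin, Hc, Hs. unfold order_sq. ring.
Qed.

(* The mean of the u_j is R^2 while each u_j is at most R. *)
Lemma order_sq_bounds : 0 <= order_sq N th <= 1.
Proof.
  set (rho := order_sq N th). set (s := sqrt rho).
  assert (Hrho : 0 <= rho) by (unfold rho, order_sq; nra).
  assert (Hss : s * s = rho) by (apply sqrt_sqrt; exact Hrho).
  assert (Hs : 0 <= s) by apply sqrt_pos.
  assert (Hu : forall j, alignment N th j <= s).
  { intros j. pose proof (alignment_sqr_add_kur_rhs_sqr j). fold rho in H. nra. }
  assert (Hsum : INR N * rho <= INR N * s).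
  { unfold rho. rewrite <- sum_alignment.
    replace (INR N * s) with (sum_f_R0 (fun _ => s) (N - 1))
      by (rewrite sum_cte; replace (S (N - 1)) with N by lia; ring).
    apply sum_Rle. intros; apply Hu. }
  split; [exact Hrho|].
  apply Rmult_le_reg_l in Hsum; [nra | exact INR_N_pos].
Qed.

Lemma Rabs_alignment_le_1 i : Rabs (alignment N th i) <= 1.
Proof.
  pose proof (alignment_sqr_add_kur_rhs_sqr i). pose proof order_sq_bounds.
  apply Rabs_le. nra.
Qed.

Lemma order_sq_near_level :
  0 < order_sq N th ->
  exists m, (m <= N)%nat /\
    Rabs (INR N * sqrt (order_sq N th) - (INR N - 2 * INR m)) * order_sq N th
      <= dissipation N th.
Proof.
  intros Hrho. set (rho := order_sq N th) in *. set (s := sqrt rho).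
  assert (Hs : 0 < s) by (apply sqrt_lt_R0; exact Hrho).
  assert (Hss : s * s = rho) by (apply sqrt_sqrt; lra).
  destruct (sum_near_signed_count (alignment N th) (kur_rhs N th) s (N - 1) Hs) as [m [Hm Hb]].
  { intros j _. rewrite alignment_sqr_add_kur_rhs_sqr. symmetry. exact Hss. }
  replace (S (N - 1)) with N in * by lia.
  exists m. split; [exact Hm|].
  rewrite sum_alignment in Hb. fold rho in Hb.
  replace (INR N * rho - (INR N - 2 * INR m) * s) with ((INR N * s - (INR N - 2 * INR m)) * s)
    in Hb by (rewrite <- Hss; ring).
  rewrite Rabs_mult, (Rabs_right s) in Hb by lra.
  unfold dissipation. rewrite <- Hss. nra.
Qed.

Section Stationary.

Hypothesis th_stationary : is_stationary_config N th.
Hypothesis order_sq_pos : 0 < order_sq N th.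

Lemma stationary_alignment_sign j :
  (j < N)%nat ->
  alignment N th j = sqrt (order_sq N th) \/ alignment N th j = - sqrt (order_sq N th).
Proof.
  intros Hj. pose proof (alignment_sqr_add_kur_rhs_sqr j) as Huv.
  rewrite (th_stationary j Hj) in Huv.
  pose proof (sqrt_sqrt (order_sq N th) ltac:(lra)).
  assert (Hfac : (alignment N th j - sqrt (order_sq N th)) *
                 (alignment N th j + sqrt (order_sq N th)) = 0) by nra.
  apply Rmult_integral in Hfac. destruct Hfac; [left | right]; lra.
Qed.

Lemma stationary_phase_classes i j :
  (i < N)%nat -> (j < N)%nat -> 0 < alignment N th j ->
  (0 < alignment N th i -> eq_mod2pi (th i) (th j)) /\
  (alignment N th i <= 0 -> eq_mod2pi (th i) (th j + PI)).
Proof.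
  intros Hi Hj Hpos.
  assert (Hsin : sin (th i - th j) = 0).
  { apply (Rmult_eq_reg_l (order_sq N th)); [|lra].
    rewrite <- alignment_kur_rhs_cross, (th_stationary i Hi), (th_stationary j Hj). ring. }
  assert (Hcos : order_sq N th * cos (th i - th j) = alignment N th i * alignment N th j).
  { rewrite <- alignment_mul_add_kur_rhs_mul, (th_stationary i Hi), (th_stationary j Hj). ring. }
  pose proof (sqrt_sqrt (order_sq N th) ltac:(lra)).
  pose proof (sqrt_lt_R0 (order_sq N th) order_sq_pos).
  destruct (stationary_alignment_sign j Hj) as [Hu0 | Hu0]; [|lra].
  split; intros Hui; destruct (stationary_alignment_sign i Hi) as [Hu | Hu]; try lra.
  - apply eq_mod2pi_of_sin_cos; [exact Hsin|].
    apply (Rmult_eq_reg_l (order_sq N th)); [|lra]. rewrite Hcos, Hu, Hu0. lra.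
  - apply eq_mod2pi_antipodal_of_sin_cos; [exact Hsin|].
    apply (Rmult_eq_reg_l (order_sq N th)); [|lra]. rewrite Hcos, Hu, Hu0. lra.
Qed.

Lemma is_type_of_stationary_config : exists k, is_type N k th.
Proof.
  set (r := sqrt (order_sq N th)).
  assert (Hr : 0 < r) by (apply sqrt_lt_R0; exact order_sq_pos).
  assert (Hrr : r * r = order_sq N th) by (apply sqrt_sqrt; lra).
  set (pos := fun j => if Rlt_dec 0 (alignment N th j) then true else false).
  assert (Hu : forall j, (j < N)%nat -> alignment N th j = if pos j then r else - r).
  { intros j Hj. unfold pos.
    destruct (Rlt_dec 0 (alignment N th j)); destruct (stationary_alignment_sign j Hj) as [H | H];
      fold r in H; lra. }
  set (I := filter pos (seq 0 N)).
  set (k := length (filter (fun j => negb (pos j)) (seq 0 N))).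
  assert (HI : length I = (N - k)%nat).
  { pose proof (filter_length pos (seq 0 N)). rewrite length_seq in H. unfold I, k. lia. }
  assert (Hlevel : INR N * r = INR N - 2 * INR k).
  { apply (Rmult_eq_reg_l r); [|lra].
    rewrite <- Rmult_assoc, (Rmult_comm r), Rmult_assoc, Hrr, <- sum_alignment.
    rewrite (sum_eq _ (fun j => r * (if pos j then 1 else -1) + 0 * 0))
      by (intros j Hj; rewrite Hu by lia; destruct (pos j); ring).
    rewrite sum_f_R0_lin, sum_sign_count. replace (S (N - 1)) with N by lia. fold k. ring. }
  assert (Hk : (2 * k < N)%nat).
  { apply INR_lt. rewrite mult_INR. simpl (INR 2). nra. }
  assert (HinI : forall i, In i I <-> (i < N)%nat /\ pos i = true).
  { intros i. unfold I. rewrite filter_In, in_seq. split; intros [? ?]; split; auto; lia. }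
  destruct I as [|j0 I'] eqn:EI; [simpl in HI; lia|].
  destruct (proj1 (HinI j0) (or_introl eq_refl)) as [Hj0 Hpos0].
  assert (Hu0 : 0 < alignment N th j0) by (rewrite (Hu j0 Hj0), Hpos0; exact Hr).
  exists k. split; [exact Hk|]. exists (th j0), (j0 :: I').
  split; [rewrite <- EI; apply NoDup_filter, seq_NoDup|].
  split; [intros i Hi; apply HinI in Hi; tauto|].
  split; [exact HI|].
  intros i Hi. destruct (stationary_phase_classes i j0 Hi Hj0 Hu0) as [Hsame Hopp].
  rewrite HinI. specialize (Hu i Hi). destruct (pos i).
  - split; [intros _; apply Hsame; lra | intros Hn; exfalso; apply Hn; auto].
  - split; [intros [_ Hf]; discriminate Hf | intros _; apply Hopp; lra].
Qed.

End Stationary.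

End Configuration.

Lemma length_filter_not_in_seq (I : list nat) N :
  NoDup I -> (forall i, In i I -> (i < N)%nat) ->
  length (filter (fun j => if in_dec Nat.eq_dec j I then false else true) (seq 0 N)) =
  (N - length I)%nat.
Proof.
  intros Hnodup HI.
  set (inI := fun j => if in_dec Nat.eq_dec j I then true else false).
  assert (HinI : forall j, inI j = true <-> In j I).
  { intros j. unfold inI. destruct (in_dec Nat.eq_dec j I); split; auto; discriminate. }
  assert (Hfilter : length (filter inI (seq 0 N)) = length I).
  { apply Nat.le_antisymm; apply NoDup_incl_length.
    - apply NoDup_filter, seq_NoDup.
    - intros j Hj. apply filter_In in Hj. apply HinI, Hj.
    - exact Hnodup.
    - intros j Hj. apply filter_In. rewrite in_seq, HinI. specialize (HI j Hj).
      split; [lia | exact Hj]. }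
  pose proof (filter_length inI (seq 0 N)) as Hsplit.
  rewrite length_seq, Hfilter in Hsplit.
  rewrite (filter_ext _ (fun j => negb (inI j)))
    by (intros j; unfold inI; destruct (in_dec Nat.eq_dec j I); reflexivity).
  lia.
Qed.

Lemma is_type_antipodal_pairs N k th :
  is_type N k th -> (2 <= k)%nat ->
  exists phi a b c d, (a < N)%nat /\ (b < N)%nat /\ (c < N)%nat /\ (d < N)%nat /\
    a <> b /\ c <> d /\ eq_mod2pi (th a) phi /\ eq_mod2pi (th b) phi /\
    eq_mod2pi (th c) (phi + PI) /\ eq_mod2pi (th d) (phi + PI).
Proof.
  intros [Hk [phi [I [HnodupI [HI [Hlen Hcl]]]]]] Hk2.
  set (J := filter (fun j => if in_dec Nat.eq_dec j I then false else true) (seq 0 N)).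
  assert (HinJ : forall j, In j J -> (j < N)%nat /\ ~ In j I).
  { intros j Hj. apply filter_In in Hj as [Hj Hout]. apply in_seq in Hj.
    destruct (in_dec Nat.eq_dec j I); [discriminate | split; [lia | assumption]]. }
  assert (HlenJ : length J = k)
    by (unfold J; rewrite (length_filter_not_in_seq I N HnodupI HI); lia).
  assert (HnodupJ : NoDup J) by apply NoDup_filter, seq_NoDup.
  destruct I as [|a [|b I']]; simpl in Hlen; try lia.
  destruct J as [|c [|d J']]; simpl in HlenJ; try lia.
  apply NoDup_cons_iff in HnodupI as [Hab _]. apply NoDup_cons_iff in HnodupJ as [Hcd _].
  assert (Ha : (a < N)%nat) by (apply HI; simpl; auto).
  assert (Hb : (b < N)%nat) by (apply HI; simpl; auto).
  destruct (HinJ c (or_introl eq_refl)) as [Hc HcI].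
  destruct (HinJ d (or_intror (or_introl eq_refl))) as [Hd HdI].
  exists phi, a, b, c, d. repeat split; auto.
  - intros ->. apply Hab. simpl. auto.
  - intros ->. apply Hcd. simpl. auto.
  - apply (Hcl a Ha). simpl. auto.
  - apply (Hcl b Hb). simpl. auto.
  - apply (Hcl c Hc). exact HcI.
  - apply (Hcl d Hd). exact HdI.
Qed.

Section ConfigurationLimits.

Context {T : Type} {F : (T -> Prop) -> Prop} {FF : Filter F}.
Variables (N : nat) (th : T -> nat -> R) (ths : nat -> R).
Hypothesis N_pos : (0 < N)%nat.
Hypothesis th_lim : forall j, (j < N)%nat -> filterlim (fun x => th x j) F (locally (ths j)).

Lemma filterlim_order_sq :
  filterlim (fun x => order_sq N (th x)) F (locally (order_sq N ths)).
Proof.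
  assert (Hc : filterlim (fun x => mean_cos N (th x)) F (locally (mean_cos N ths))).
  { apply filterlim_Rscal, (filterlim_sum_f_R0 (fun j x => cos (th x j))).
    intros j Hj. apply filterlim_cos_comp, th_lim. lia. }
  assert (Hs : filterlim (fun x => mean_sin N (th x)) F (locally (mean_sin N ths))).
  { apply filterlim_Rscal, (filterlim_sum_f_R0 (fun j x => sin (th x j))).
    intros j Hj. apply filterlim_sin_comp, th_lim. lia. }
  unfold order_sq. apply filterlim_Rplus; apply filterlim_Rmult; assumption.
Qed.

Lemma filterlim_dissipation :
  filterlim (fun x => dissipation N (th x)) F (locally (dissipation N ths)).
Proof.
  assert (Hv : forall i, (i < N)%nat ->
            filterlim (fun x => kur_rhs N (th x) i) F (locally (kur_rhs N ths i))).
  { intros i Hi. apply filterlim_Rscal, (filterlim_sum_f_R0 (fun j x => sin (th x i - th x j))).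
    intros j Hj. apply filterlim_sin_comp, filterlim_Rminus; apply th_lim; lia. }
  apply (filterlim_sum_f_R0 (fun j x => kur_rhs N (th x) j * kur_rhs N (th x) j)).
  intros j Hj. apply filterlim_Rmult; apply Hv; lia.
Qed.

End ConfigurationLimits.

(** * Solutions *)

Definition config_at (theta : nat -> R -> R) (t : R) : nat -> R := fun j => theta j t.

Section Solution.

Variables (N : nat) (theta : nat -> R -> R).
Hypothesis N_ge_2 : (2 <= N)%nat.
Hypothesis theta_sol : is_solution N theta.

Let N_pos : (0 < N)%nat.
Proof. lia. Qed.

Let INR_N_pos : 0 < INR N.
Proof. apply lt_0_INR. exact N_pos. Qed.

Let rho (t : R) : R := order_sq N (config_at theta t).
Let diss (t : R) : R := dissipation N (config_at theta t).

Lemma theta_derive i t :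
  (i < N)%nat -> 0 < t -> derivable_pt_lim (theta i) t (kur_rhs N (config_at theta t) i).
Proof. intros Hi Ht. exact (proj1 theta_sol i Hi t Ht). Qed.

Lemma theta_right_continuous i :
  (i < N)%nat -> filterlim (theta i) (at_right 0) (locally (theta i 0)).
Proof.
  intros Hi. apply filterlim_locally. intros eps.
  destruct (proj2 theta_sol i Hi eps (cond_pos eps)) as [delta [Hdelta Hclose]].
  exists (mkposreal delta Hdelta). intros t Hball Ht. apply Hclose.
  change (Rabs (t - 0) < delta) in Hball. apply Rabs_lt_between' in Hball. lra.
Qed.

Lemma order_sq_derive t : 0 < t -> derivable_pt_lim rho t (2 / INR N * diss t).
Proof.
  intros Ht. set (v := kur_rhs N (config_at theta t)).
  assert (HX : derivable_pt_lim (fun s => mean_cos N (config_at theta s)) t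
                 (/ INR N * sum_f_R0 (fun j => - sin (theta j t) * v j) (N - 1))).
  { apply (derivable_pt_lim_scal (fun s => sum_f_R0 (fun j => cos (theta j s)) (N - 1))).
    apply (derivable_pt_lim_sum_f_R0 (fun j s => cos (theta j s))). intros j Hj.
    apply derivable_pt_lim_cos_comp, theta_derive; [lia | exact Ht]. }
  assert (HY : derivable_pt_lim (fun s => mean_sin N (config_at theta s)) t
                 (/ INR N * sum_f_R0 (fun j => cos (theta j t) * v j) (N - 1))).
  { apply (derivable_pt_lim_scal (fun s => sum_f_R0 (fun j => sin (theta j s)) (N - 1))).
    apply (derivable_pt_lim_sum_f_R0 (fun j s => sin (theta j s))). intros j Hj.
    apply derivable_pt_lim_sin_comp, theta_derive; [lia | exact Ht]. }
  apply (derivable_pt_lim_eq_deriv _ _ _ _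
           (derivable_pt_lim_plus _ _ t _ _ (derivable_pt_lim_mult _ _ t _ _ HX HX)
                                             (derivable_pt_lim_mult _ _ t _ _ HY HY))).
  unfold diss, dissipation, mult_fct.
  rewrite (sum_eq (fun j => v j * v j)
             (fun j => mean_cos N (config_at theta t) * (- sin (theta j t) * v j)
                       + mean_sin N (config_at theta t) * (cos (theta j t) * v j))).
  - rewrite sum_f_R0_lin. field. lra.
  - intros j _. unfold v at 1. rewrite kur_rhs_order_param by exact N_pos.
    unfold config_at. cbv beta. ring.
Qed.

Lemma order_sq_nondecreasing x y : 0 < x -> x <= y -> rho x <= rho y.
Proof.
  apply (nondecreasing_of_derive_nonneg rho (fun t => 2 / INR N * diss t) 0).
  - exact order_sq_derive.
  - intros t _. apply Rmult_le_pos; [apply Rdiv_le_0_compat; lra | apply dissipation_nonneg].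
Qed.

Lemma dissipation_frequently_small d T : 0 < d -> exists t, T <= t /\ 0 < t /\ diss t < d.
Proof.
  intros Hd.
  assert (Hbound : forall t, Rabs (rho t) <= 1).
  { intros t. apply Rabs_le. pose proof (order_sq_bounds N (config_at theta t) N_pos).
    unfold rho. lra. }
  destruct (derive_frequently_small rho (fun t => 2 / INR N * diss t) 1 order_sq_derive Hbound
              (2 / INR N * d) T) as [t [HT [Ht Hsmall]]].
  { apply Rmult_lt_0_compat; [apply Rdiv_lt_0_compat|]; lra. }
  exists t. repeat split; try assumption.
  apply Rmult_lt_reg_l with (2 / INR N); [apply Rdiv_lt_0_compat; lra | exact Hsmall].
Qed.

Lemma order_sq_limit : exists L : R, is_lim rho p_infty L /\ forall t, 0 < t -> rho t <= L.
Proof.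
  apply (is_lim_nondecreasing_bounded rho 0 1).
  - intros x y Hx Hxy. apply order_sq_nondecreasing; assumption.
  - intros t _. apply (order_sq_bounds N (config_at theta t) N_pos).
Qed.

Lemma order_sq_eventually_pos :
  ~ is_stationary_solution N theta -> exists t0, 0 < t0 /\ 0 < rho t0.
Proof.
  intros Hns. apply NNPP. intros Hzero. apply Hns. intros i Hi t Ht.
  assert (Hv : forall s, 0 < s -> kur_rhs N (config_at theta s) i = 0).
  { intros s Hs.
    assert (Hrho : rho s = 0).
    { pose proof (order_sq_bounds N (config_at theta s) N_pos).
      apply Rle_antisym; [apply Rnot_lt_le; intros Hp; apply Hzero; exists s; auto | tauto]. }
    pose proof (alignment_sqr_add_kur_rhs_sqr N (config_at theta s) N_pos i).
    unfold rho in Hrho. nra. }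
  assert (Hconst : forall s, 0 < s -> theta i s = theta i 1).
  { intros s Hs. apply (constant_of_derive_zero (theta i) 0); [|lra|lra].
    intros r Hr. rewrite <- (Hv r Hr). apply theta_derive; assumption. }
  assert (H0 : theta i 0 = theta i 1).
  { apply (filterlim_eventually_const (theta i) _ _ (theta_right_continuous i Hi)).
    exists (mkposreal 1 Rlt_0_1). intros s _ Hs. apply Hconst, Hs. }
  exists 0%Z. rewrite Rmult_0_r, Rplus_0_r.
  destruct (Rle_lt_or_eq_dec 0 t Ht) as [Hpos | <-]; [|reflexivity].
  rewrite (Hconst t Hpos), H0. reflexivity.
Qed.

Section Limit.

Variables (L t0 : R).
Hypothesis rho_lim : is_lim rho p_infty L.
Hypothesis rho_le_lim : forall t, 0 < t -> rho t <= L.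
Hypothesis t0_pos : 0 < t0.
Hypothesis rho_t0_pos : 0 < rho t0.

Lemma near_level_after t :
  t0 <= t -> exists m : nat, Rabs (INR N * sqrt (rho t) - (INR N - 2 * INR m)) * rho t0 <= diss t.
Proof.
  intros Ht. assert (Hmono : rho t0 <= rho t) by (apply order_sq_nondecreasing; assumption).
  destruct (order_sq_near_level N (config_at theta t) N_pos ltac:(fold (rho t); lra))
    as [m [_ Hm]].
  exists m. eapply Rle_trans; [|exact Hm]. apply Rmult_le_compat_l; [apply Rabs_pos | exact Hmono].
Qed.

Lemma scaled_sqrt_order_sq_lim :
  is_lim (fun t => INR N * sqrt (rho t)) p_infty (INR N * sqrt L).
Proof. apply filterlim_Rscal, filterlim_sqrt_comp, rho_lim. Qed.

Lemma order_sq_limit_level : exists k : nat, INR N * sqrt L = INR N - 2 * INR k.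
Proof.
  apply level_of_approx. intros e He.
  pose proof scaled_sqrt_order_sq_lim as Hlim. apply is_lim_spec in Hlim.
  destruct (Hlim (mkposreal (e / 2) ltac:(lra))) as [M HM]. simpl in HM.
  destruct (dissipation_frequently_small (e / 2 * rho t0) (Rmax (M + 1) t0)) as [t [Ht [_ Hd]]].
  { apply Rmult_lt_0_compat; lra. }
  pose proof (Rmax_l (M + 1) t0). pose proof (Rmax_r (M + 1) t0).
  destruct (near_level_after t ltac:(lra)) as [m Hm]. exists m.
  assert (Hnear : Rabs (INR N * sqrt (rho t) - (INR N - 2 * INR m)) < e / 2).
  { apply Rmult_lt_reg_r with (rho t0); [exact rho_t0_pos | lra]. }
  specialize (HM t ltac:(lra)).
  replace (INR N * sqrt L - (INR N - 2 * INR m)) with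
    (- (INR N * sqrt (rho t) - INR N * sqrt L) + (INR N * sqrt (rho t) - (INR N - 2 * INR m)))
    by ring.
  eapply Rle_lt_trans; [apply Rabs_triang|]. rewrite Rabs_Ropp. lra.
Qed.

(* Once N sqrt (rho t) is within 1 of the level N sqrt L, every other level N - 2m is farther
   away, so [near_level_after] gives N (sqrt L - sqrt (rho t)) * rho t0 <= D. *)
Lemma lojasiewicz_inequality :
  exists C T, 0 < C /\ 0 < T /\ forall t, T <= t -> L - rho t <= C * diss t.
Proof.
  destruct order_sq_limit_level as [k Hk].
  pose proof scaled_sqrt_order_sq_lim as Hlim. apply is_lim_spec in Hlim.
  destruct (Hlim (mkposreal 1 Rlt_0_1)) as [M HM]. simpl in HM.
  set (r := sqrt L).
  assert (HL : rho t0 <= L) by (apply rho_le_lim; exact t0_pos).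
  assert (Hr : 0 < r) by (apply sqrt_lt_R0; lra).
  assert (Hrr : r * r = L) by (apply sqrt_sqrt; lra).
  exists (2 * r / (INR N * rho t0)), (Rmax (M + 1) t0).
  split; [apply Rdiv_lt_0_compat; [lra | apply Rmult_lt_0_compat; assumption]|].
  pose proof (Rmax_l (M + 1) t0). pose proof (Rmax_r (M + 1) t0).
  split; [lra|]. intros t Ht.
  set (s := sqrt (rho t)).
  assert (Hrho : 0 <= rho t <= L).
  { split; [apply (order_sq_bounds N (config_at theta t) N_pos) | apply rho_le_lim; lra]. }
  assert (Hss : s * s = rho t) by (apply sqrt_sqrt; lra).
  assert (Hsr : 0 <= s <= r) by (split; [apply sqrt_pos | apply sqrt_le_1_alt; lra]).
  destruct (near_level_after t ltac:(lra)) as [m Hm]. fold s in Hm.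
  pose proof (level_gap N k m (INR N * r) (INR N * s) Hk) as Hgap.
  specialize (HM t ltac:(lra)). fold r s in HM. rewrite Rabs_minus_sym in HM.
  specialize (Hgap HM). rewrite Rabs_right in Hgap by nra.
  assert (Hgap' : INR N * (r - s) * rho t0 <= diss t).
  { eapply Rle_trans; [|exact Hm]. apply Rmult_le_compat_r; lra. }
  rewrite <- Hrr, <- Hss.
  apply Rle_trans with (2 * r * (r - s)); [nra|].
  apply (Rmult_le_reg_l (INR N * rho t0)); [apply Rmult_lt_0_compat; assumption|].
  replace (INR N * rho t0 * (2 * r / (INR N * rho t0) * diss t)) with (2 * r * diss t)
    by (field; split; lra).
  nra.
Qed.

Lemma theta_frozen_after_limit_reached j t1 :
  (j < N)%nat -> 0 < t1 -> rho t1 = L -> exists l : R, is_lim (theta j) p_infty l.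
Proof.
  intros Hj Ht1 Hrho1.
  assert (HrhoL : forall x, t1 <= x -> rho x = L).
  { intros x Hx. apply Rle_antisym; [apply rho_le_lim; lra|].
    rewrite <- Hrho1. apply order_sq_nondecreasing; lra. }
  assert (Hv : forall t, t1 < t -> kur_rhs N (config_at theta t) j = 0).
  { intros t Ht.
    assert (Hd : 2 / INR N * diss t = 0).
    { apply (derive_zero_at_interior_max rho t1 (t + 1) t); [lra | | apply order_sq_derive; lra].
      intros x Hx. rewrite !HrhoL; lra. }
    assert (Hdiss : diss t = 0).
    { apply Rmult_integral in Hd. destruct Hd as [Hd | Hd]; [|exact Hd].
      exfalso. assert (0 < 2 / INR N) by (apply Rdiv_lt_0_compat; lra). lra. }
    pose proof (kur_rhs_sqr_le_dissipation N (config_at theta t) j Hj). fold (diss t) in H. nra. }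
  exists (theta j (t1 + 1)).
  apply (is_lim_ext_loc (fun _ => theta j (t1 + 1))); [|apply is_lim_const].
  exists t1. intros t Ht. symmetry. apply (constant_of_derive_zero (theta j) t1); [|lra|lra].
  intros s Hs. rewrite <- (Hv s Hs). apply theta_derive; [exact Hj | lra].
Qed.

Lemma theta_converges j : (j < N)%nat -> exists l : R, is_lim (theta j) p_infty l.
Proof.
  intros Hj. destruct lojasiewicz_inequality as [C [T [HC [HT Hloj]]]].
  destruct (classic (exists t1, T <= t1 /\ rho t1 = L)) as [[t1 [Ht1 Hrho1]] | Hbelow].
  { apply (theta_frozen_after_limit_reached j t1 Hj); [lra | exact Hrho1]. }
  assert (Hgap : forall t, T <= t -> 0 < L - rho t).
  { intros t Ht. destruct (Rle_lt_or_eq_dec _ _ (rho_le_lim t ltac:(lra))); [lra|].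
    exfalso. apply Hbelow. exists t. auto. }
  set (v := fun t => kur_rhs N (config_at theta t) j).
  set (G := fun t => sqrt (L - rho t)). set (A := INR N * (C + 1)).
  apply (is_lim_of_derive_dominated (theta j) v (fun t => A * G t)
           (fun t => A * (/ (2 * G t) * (0 - 2 / INR N * diss t))) T).
  - intros t Ht. apply theta_derive; [exact Hj | lra].
  - intros t Ht. apply (derivable_pt_lim_scal (fun t => G t)).
    exact (derivable_pt_lim_comp (fun s => L - rho s) sqrt t _ _
             (derivable_pt_lim_minus _ _ t _ _ (derivable_pt_lim_const L t)
                (order_sq_derive t ltac:(lra)))
             (derivable_pt_lim_sqrt _ (Hgap t ltac:(lra)))).
  - intros t Ht.
    assert (HG : 0 < G t) by (apply sqrt_lt_R0, Hgap; lra).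
    assert (HGG : G t * G t <= C * diss t).
    { unfold G. rewrite sqrt_sqrt by (pose proof (Hgap t ltac:(lra)); lra). apply Hloj; lra. }
    pose proof (kur_rhs_sqr_le_dissipation N (config_at theta t) j Hj) as Hv.
    fold (v t) (diss t) in Hv.
    replace (- (A * (/ (2 * G t) * (0 - 2 / INR N * diss t)))) with (A * diss t / (INR N * G t))
      by (field; lra).
    apply (Rmult_le_reg_r (INR N * G t)); [nra|].
    replace (A * diss t / (INR N * G t) * (INR N * G t)) with (A * diss t) by (field; lra).
    pose proof (Rabs_mul_le_of_sqr_le (v t) (G t) (diss t) C Hv HGG ltac:(lra) ltac:(lra)).
    unfold A. nra.
  - intros t Ht. apply Rmult_le_pos; [unfold A; nra | apply sqrt_pos].
Qed.

Lemma limit_is_stationary (ths : nat -> R) :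
  (forall j, (j < N)%nat -> is_lim (theta j) p_infty (ths j)) ->
  is_stationary_config N ths /\ 0 < order_sq N ths.
Proof.
  intros Hths.
  assert (Hrho : order_sq N ths = L).
  { apply (filterlim_R_unique (F := Rbar_locally' p_infty) rho); [|exact rho_lim].
    exact (filterlim_order_sq N (config_at theta) ths N_pos Hths). }
  assert (Hdiss : dissipation N ths <= 0).
  { apply (is_lim_le_of_frequently_lt diss).
    - exact (filterlim_dissipation N (config_at theta) ths N_pos Hths).
    - intros d T Hd. destruct (dissipation_frequently_small d T Hd) as [t [Ht [_ Hsmall]]]. eauto. }
  split.
  - intros i Hi. pose proof (kur_rhs_sqr_le_dissipation N ths i Hi). nra.
  - rewrite Hrho. pose proof (rho_le_lim t0 t0_pos). lra.
Qed.

End Limit.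

Let half_sin (x y : nat) (t : R) : R := sin ((theta x t - theta y t) / 2).

Lemma half_sin_derive x y t :
  (x < N)%nat -> (y < N)%nat -> 0 < t ->
  derivable_pt_lim (half_sin x y) t
    (- ((alignment N (config_at theta t) x + alignment N (config_at theta t) y) / 2)
     * half_sin x y t).
Proof.
  intros Hx Hy Ht.
  apply (derivable_pt_lim_eq_deriv _ _ _ _
    (derivable_pt_lim_sin_comp (fun s => (theta x s - theta y s) / 2) t _
       (derivable_pt_lim_half_sub _ _ t _ _ (theta_derive x t Hx Ht) (theta_derive y t Hy Ht)))).
  rewrite !kur_rhs_order_param by exact N_pos.
  unfold alignment, half_sin, config_at. apply sin_half_drift_identity.
Qed.

(* half_sin a c * half_sin b d / (half_sin a d * half_sin b c) is the cross ratio of the points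
   e^{i theta_a}, ..., e^{i theta_d}; both products satisfy P' = -H P with the same H. *)
Lemma cross_ratio_conserved a b c d tau t :
  (a < N)%nat -> (b < N)%nat -> (c < N)%nat -> (d < N)%nat -> 0 < tau -> tau <= t ->
  half_sin a c t * half_sin b d t * (half_sin a d tau * half_sin b c tau) =
  half_sin a d t * half_sin b c t * (half_sin a c tau * half_sin b d tau).
Proof.
  intros Ha Hb Hc Hd Htau Ht.
  set (Q0 := half_sin a d tau * half_sin b c tau). set (P0 := half_sin a c tau * half_sin b d tau).
  set (u := fun s i => alignment N (config_at theta s) i).
  set (w := fun s => half_sin a c s * half_sin b d s * Q0 - half_sin a d s * half_sin b c s * P0).
  enough (w t = 0) by (unfold w in *; lra).
  apply (linear_ode_vanishes w (fun s => - ((u s a + u s b + u s c + u s d) / 2)) 0 2 tau);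
    [| | exact Htau | unfold w, Q0, P0; ring | exact Ht].
  - intros s Hs.
    pose proof (fun x y Hx Hy => half_sin_derive x y s Hx Hy Hs) as Hder.
    apply (derivable_pt_lim_eq_deriv _ _ _ _
      (derivable_pt_lim_minus _ _ s _ _
        (derivable_pt_lim_mult _ _ s _ _
          (derivable_pt_lim_mult _ _ s _ _ (Hder a c Ha Hc) (Hder b d Hb Hd))
          (derivable_pt_lim_const Q0 s))
        (derivable_pt_lim_mult _ _ s _ _
          (derivable_pt_lim_mult _ _ s _ _ (Hder a d Ha Hd) (Hder b c Hb Hc))
          (derivable_pt_lim_const P0 s)))).
    unfold w, u, fct_cte, mult_fct. field.
  - intros s _. unfold u.
    pose proof (Rabs_alignment_le_1 N (config_at theta s) N_pos a).
    pose proof (Rabs_alignment_le_1 N (config_at theta s) N_pos b).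
    pose proof (Rabs_alignment_le_1 N (config_at theta s) N_pos c).
    pose proof (Rabs_alignment_le_1 N (config_at theta s) N_pos d).
    repeat match goal with H : Rabs _ <= 1 |- _ => apply Rabs_le_between in H end. lra.
Qed.

Section AntipodalLimits.

Variables (a b c d : nat) (phi la lb lc ld : R).
Hypotheses (Ha : (a < N)%nat) (Hb : (b < N)%nat) (Hc : (c < N)%nat) (Hd : (d < N)%nat).
Hypotheses (La : is_lim (theta a) p_infty la) (Lb : is_lim (theta b) p_infty lb)
           (Lc : is_lim (theta c) p_infty lc) (Ld : is_lim (theta d) p_infty ld).
Hypotheses (Ea : eq_mod2pi la phi) (Eb : eq_mod2pi lb phi)
           (Ec : eq_mod2pi lc (phi + PI)) (Ed : eq_mod2pi ld (phi + PI)).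

(* The limiting cross ratio is 1, so by conservation the two products agree at every time and
   Ptolemy's identity makes half_sin a b * half_sin c d vanish. *)
Lemma antipodal_pairs_half_sin_product tau :
  0 < tau -> half_sin a b tau * half_sin c d tau = 0.
Proof.
  intros Htau.
  set (P := sin ((la - lc) / 2) * sin ((lb - ld) / 2)).
  set (Q := sin ((la - ld) / 2) * sin ((lb - lc) / 2)).
  assert (HPQ : P = Q).
  { enough (P - Q = 0) by lra. unfold P, Q.
    rewrite sin_half_ptolemy, (sin_half_eq_mod2pi la lb phi Ea Eb). ring. }
  assert (HP : P * P = 1).
  { pose proof (sin_half_sqr_of_cos_eq_m1 _ (cos_sub_antipodal la lc phi Ea Ec)) as H1.
    pose proof (sin_half_sqr_of_cos_eq_m1 _ (cos_sub_antipodal lb ld phi Eb Ed)) as H2.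
    unfold P. transitivity (sin ((la - lc) / 2) * sin ((la - lc) / 2)
                            * (sin ((lb - ld) / 2) * sin ((lb - ld) / 2))); [ring|].
    rewrite H1, H2. ring. }
  set (Q0 := half_sin a d tau * half_sin b c tau). set (P0 := half_sin a c tau * half_sin b d tau).
  assert (Hlim : filterlim
            (fun t => half_sin a c t * half_sin b d t * Q0 - half_sin a d t * half_sin b c t * P0)
            (Rbar_locally' p_infty) (locally (P * Q0 - Q * P0))).
  { unfold P, Q, half_sin.
    apply filterlim_Rminus; (apply filterlim_Rmult; [apply filterlim_Rmult | apply filterlim_const]);
      apply filterlim_sin_half_sub; assumption. }
  assert (Hzero : P * Q0 - Q * P0 = 0).
  { apply (filterlim_eventually_const _ _ 0 Hlim). exists tau. intros t Ht.
    unfold Q0, P0. rewrite (cross_ratio_conserved a b c d tau t); [ring | assumption..| lra]. }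
  assert (HP0 : P0 = Q0).
  { rewrite <- HPQ in Hzero. assert (Hfac : P * (Q0 - P0) = 0) by lra.
    apply Rmult_integral in Hfac. destruct Hfac as [H0 | H0]; [rewrite H0 in HP; lra | lra]. }
  transitivity (P0 - Q0); [|lra].
  unfold P0, Q0, half_sin. symmetry. apply sin_half_ptolemy.
Qed.

Lemma antipodal_limits_force_initial_collision :
  eq_mod2pi (theta a 0) (theta b 0) \/ eq_mod2pi (theta c 0) (theta d 0).
Proof.
  assert (H0 : half_sin a b 0 * half_sin c d 0 = 0).
  { apply (filterlim_eventually_const (F := at_right 0)
             (fun t => half_sin a b t * half_sin c d t)).
    - apply filterlim_Rmult; apply filterlim_sin_half_sub; apply theta_right_continuous; assumption.
    - exists (mkposreal 1 Rlt_0_1). intros t _ Ht. apply antipodal_pairs_half_sin_product, Ht. }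
  apply Rmult_integral in H0. destruct H0 as [H0 | H0]; [left | right];
    apply eq_mod2pi_of_sin_half, H0.
Qed.

End AntipodalLimits.

End Solution.

Theorem theorem2p4 (N : nat) (theta : nat -> R -> R) :
  (2 <= N)%nat ->
  is_solution N theta ->
  ~ is_stationary_solution N theta ->
  exists thstar : nat -> R,
    (forall i, (i < N)%nat -> converges_to (theta i) (thstar i)) /\
    is_stationary_config N thstar /\
    (exists k : nat, is_type N k thstar) /\
    ((forall i j, (i < N)%nat -> (j < N)%nat -> i <> j ->
        ~ eq_mod2pi (theta i 0) (theta j 0)) ->
     exists k : nat, (k <= 1)%nat /\ is_type N k thstar).
Proof.
  intros HN Hsol Hns.
  destruct (order_sq_eventually_pos N theta HN Hsol Hns) as [t0 [Ht0 Hrho0]].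
  destruct (order_sq_limit N theta HN Hsol) as [L [HL HleL]].
  set (ths := fun j => real (Lim (theta j) p_infty)).
  assert (Hths : forall j, (j < N)%nat -> is_lim (theta j) p_infty (ths j)).
  { intros j Hj. destruct (theta_converges N theta HN Hsol L t0 HL HleL Ht0 Hrho0 j Hj) as [l Hl].
    unfold ths. rewrite (is_lim_unique _ _ _ Hl). exact Hl. }
  destruct (limit_is_stationary N theta HN Hsol L t0 HL HleL Ht0 Hrho0 ths Hths) as [Hst Hpos].
  destruct (is_type_of_stationary_config N ths ltac:(lia) Hst Hpos) as [k Hk].
  exists ths. split; [intros i Hi; apply converges_to_of_is_lim, Hths, Hi|].
  split; [exact Hst|]. split; [exists k; exact Hk|].
  intros Hdistinct. exists k. split; [|exact Hk].
  apply Nat.nlt_ge. intros Hk2.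
  destruct (is_type_antipodal_pairs N k ths Hk Hk2)
    as (phi & a & b & c & d & Ha & Hb & Hc & Hd & Hab & Hcd & Ea & Eb & Ec & Ed).
  destruct (antipodal_limits_force_initial_collision N theta HN Hsol a b c d phi
              (ths a) (ths b) (ths c) (ths d) Ha Hb Hc Hd
              (Hths a Ha) (Hths b Hb) (Hths c Hc) (Hths d Hd) Ea Eb Ec Ed) as [E | E].
  - exact (Hdistinct a b Ha Hb Hab E).
  - exact (Hdistinct c d Hc Hd Hcd E).
Qed.
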